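(* Let $0<x_1<x_2<x_3$ and $y_3>0$ with $y_3<1/x_2$, $x_3y_3<1$ and $x_1x_2\ge 1/\sqrt2$. Put $q_2=(x_2,1/x_2)$, $q_3=(x_3,y_3)$, $u:=(x_3-x_2)\,y_3$, and suppose $$1+\frac{x_2-x_1}{x_2}+u\ \ge\ 2.$$ Then $0<u<1$, and $x':=\dfrac{x_2}{1-u}$ satisfies $x'>x_2$, $\dfrac{x'-x_2}{x'}=u$, and $$T_h(x_2,x')\ \le\ T(q_2,q_3).$$
   Context: For points $p=(x_p,y_p)$ and $q=(x_q,y_q)$ in $(0,\infty)^2$ define $T(p,q):=\tfrac12\,(y_p-y_q+x_q-x_p)\,(x_p+y_q)$, and for $a,b>0$ define $T_h(a,b):=T((a,1/a),(b,1/b))=\tfrac12\bigl(\tfrac1a-\tfrac1b+b-a\bigr)\bigl(a+\tfrac1b\bigr)$. (In the paper: a normalized tile consisting of a step $(q_1,q_2)$ between hyperbola points, $q_1=(x_1,1/x_1)$, and a ''corner'' $(q_2,q_3)$ with $q_3$ strictly below the hyperbola $xy=1$, of area at least $2$, can be replaced by a tile with two steps of the same area and no larger crown.) *)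

From Stdlib Require Import Reals.
Open Scope R_scope.

Definition T (p q : R * R) : R :=
  / 2 * (snd p - snd q + fst q - fst p) * (fst p + snd q).

Definition T_h (a b : R) : R := T (a, / a) (b, / b).

(* Write a = x2, y = y3, u = (x3 - x2) y3 and y0 = (1 - u)/a, so that the new
   hyperbola point is x' = 1/y0 and 0 < y < y0 <= 1/a.  The proof rests on an
   exact factorisation (T_minus_T_h_factor):
       T(q2,q3) - T_h(a, 1/y0) = (y0 - y)/(2 a y y0) * P(a, y, y0),
   with P = a^2 (1 - a y0) + (a^2 - 1) y y0 + a y y0 (y + y0).
   The first factor is positive since y < y0, so it suffices that P >= 0
   (crown_poly_nonneg).  This holds once a^4 u + a^2 >= 1: for a >= 1 every
   term of P is nonnegative, and for a < 1 the negative term is absorbed by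
       (1 - a^2) y y0 <= (1 - a^2) y0^2 <= a^4 u y0^2 = a^2 u (a y0)^2 <= a^2 u.  Finally the
   area hypothesis says u a >= x1, so both a^2 and u a^2 are at least
   x1 x2 >= 1/sqrt 2, which yields a^4 u + a^2 >= 1 (area_normalised, via
   sqrt2_product_bound). *)

From Stdlib Require Import Reals Lra Psatz.
Open Scope R_scope.

Lemma T_minus_T_h_factor (a y y0 : R) :
  0 < a -> 0 < y -> 0 < y0 ->
  T (a, / a) (a + (1 - a * y0) / y, y) - T_h a (/ y0)
  = / 2 * (y0 - y) / (a * y * y0) *
    (a ^ 2 * (1 - a * y0) + (a ^ 2 - 1) * y * y0 + a * y * y0 * (y + y0)).
Proof.
  intros Ha Hy Hy0.
  unfold T_h, T; simpl.
  rewrite Rinv_inv.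
  field; lra.
Qed.

Lemma crown_poly_nonneg (a y y0 u : R) :
  0 < a -> 0 < y -> y < y0 -> a * y0 = 1 - u -> 0 <= u ->
  a ^ 4 * u + a ^ 2 >= 1 ->
  0 <= a ^ 2 * u + (a ^ 2 - 1) * y * y0 + a * y * y0 * (y + y0).
Proof.
  intros Ha Hy Hyy0 Hay0 Hu Harea.
  assert (Hcubic : 0 <= a * y * y0 * (y + y0))
    by (apply Rmult_le_pos; [repeat apply Rmult_le_pos |]; lra).
  destruct (Rle_or_lt 1 (a ^ 2)) as [Hbig | Hsmall].
  - assert (0 <= (a ^ 2 - 1) * y * y0)
      by (apply Rmult_le_pos; [apply Rmult_le_pos |]; lra).
    assert (0 <= a ^ 2 * u) by (apply Rmult_le_pos; nra).
    lra.
  - (* (1 - a^2) y y0 <= (1 - a^2) y0^2 <= a^4 u y0^2 <= a^2 u *)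
    assert (Hy_to_y0 : (1 - a ^ 2) * (y * y0) <= (1 - a ^ 2) * (y0 * y0))
      by (apply Rmult_le_compat_l; nra).
    assert (Harea_scaled : (1 - a ^ 2) * (y0 * y0) <= a ^ 4 * u * (y0 * y0))
      by (apply Rmult_le_compat_r; nra).
    assert (Hay0_pos : 0 < a * y0) by (apply Rmult_lt_0_compat; lra).
    assert (Hay0_le1 : (a * y0) * (a * y0) <= 1) by (rewrite Hay0 in *; nra).
    assert (Habsorb : a ^ 4 * u * (y0 * y0) <= a ^ 2 * u).
    { replace (a ^ 4 * u * (y0 * y0)) with (a ^ 2 * u * ((a * y0) * (a * y0)))
        by ring.
      rewrite <- (Rmult_1_r (a ^ 2 * u)) at 2.
      apply Rmult_le_compat_l; nra. }
    nra.
Qed.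

Lemma T_h_le_corner (a y y0 u : R) :
  0 < a -> 0 < y -> y < y0 -> a * y0 = 1 - u -> 0 <= u ->
  a ^ 4 * u + a ^ 2 >= 1 ->
  T_h a (/ y0) <= T (a, / a) (a + u / y, y).
Proof.
  intros Ha Hy Hyy0 Hay0 Hu Harea.
  pose proof (crown_poly_nonneg a y y0 u Ha Hy Hyy0 Hay0 Hu Harea) as Hpoly.
  pose proof (T_minus_T_h_factor a y y0 Ha Hy ltac:(lra)) as Hfactor.
  rewrite Hay0 in Hfactor.
  replace (1 - (1 - u)) with u in Hfactor by ring.
  assert (Hcoef : 0 <= / 2 * (y0 - y) / (a * y * y0)).
  { apply Rmult_le_pos; [lra |].
    apply Rlt_le, Rinv_0_lt_compat; repeat apply Rmult_lt_0_compat; lra. }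
  assert (0 <= / 2 * (y0 - y) / (a * y * y0) *
            (a ^ 2 * u + (a ^ 2 - 1) * y * y0 + a * y * y0 * (y + y0)))
    by (apply Rmult_le_pos; lra).
  lra.
Qed.

(* If b and c are both at least 1/sqrt 2 then b c >= 1/2 and c >= 1/2. *)
Lemma sqrt2_product_bound (b c : R) :
  b >= / sqrt 2 -> c >= / sqrt 2 -> b * c + c >= 1.
Proof.
  intros Hb Hc.
  set (w := / sqrt 2) in *.
  assert (Hs : sqrt 2 * sqrt 2 = 2) by (apply sqrt_sqrt; lra).
  assert (Hw2 : w * w = / 2) by (unfold w; rewrite <- Rinv_mult, Hs; reflexivity).
  assert (Hw : 0 < w) by (apply Rinv_0_lt_compat, sqrt_lt_R0; lra).
  assert (Hw_half : w >= / 2) by nra.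
  nra.
Qed.

Lemma area_normalised (x1 a u : R) :
  0 < x1 -> x1 < a -> x1 * a >= / sqrt 2 ->
  1 + (a - x1) / a + u >= 2 ->
  a ^ 4 * u + a ^ 2 >= 1.
Proof.
  intros Hx1 Hx1a Hprod Harea.
  assert (Hratio : u >= x1 / a)
    by (replace ((a - x1) / a) with (1 - x1 / a) in Harea by (field; lra); lra).
  assert (Hua : u * a >= x1)
    by (replace x1 with (x1 / a * a) by (field; lra); nra).
  replace (a ^ 4 * u) with ((u * a ^ 2) * a ^ 2) by ring.
  apply sqrt2_product_bound; nra.
Qed.

Theorem mainTheorem7 (x1 x2 x3 y3 : R) :
  0 < x1 -> x1 < x2 -> x2 < x3 -> 0 < y3 ->
  y3 < / x2 -> x3 * y3 < 1 -> x1 * x2 >= / sqrt 2 ->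
  1 + (x2 - x1) / x2 + (x3 - x2) * y3 >= 2 ->
  let u := (x3 - x2) * y3 in
  let x' := x2 / (1 - u) in
  (0 < u /\ u < 1) /\
  x' > x2 /\ (x' - x2) / x' = u /\
  T_h x2 x' <= T (x2, / x2) (x3, y3).
Proof.
  intros Hx1 Hx12 Hx23 Hy3 _ Hq3_below Hx1x2 Harea u x'.
  assert (Hu0 : 0 < u) by (unfold u; nra).
  assert (Hu1 : u < 1) by (unfold u; nra).
  (* y0 = 1/x' is the height of the new hyperbola point *)
  set (y0 := (1 - u) / x2).
  assert (Hay0 : x2 * y0 = 1 - u) by (unfold y0; field; lra).
  assert (Hx'y0 : x' = / y0) by (unfold x', y0; field; lra).
  assert (Hy3y0 : y3 < y0) by (apply (Rmult_lt_reg_l x2); [lra |]; unfold u in *; nra).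
  split; [lra |]. split; [| split].
  - rewrite Hx'y0. apply Rlt_gt, (Rmult_lt_reg_l y0); [lra |].
    rewrite Rinv_r by lra. lra.
  - unfold x'. field. lra.
  - replace (x3, y3) with (x2 + u / y3, y3) by (f_equal; unfold u; field; lra).
    rewrite Hx'y0.
    apply T_h_le_corner; try lra.
    exact (area_normalised x1 x2 u Hx1 Hx12 Hx1x2 Harea).
Qed.
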